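(* Let $m$ be an integer. (i) If $m=N_2(1+(x-1)^5h(x))$ for some $h\in\mathbb Z[x]$ with $3\nmid h(1)$, then there is $F\in\mathbb Z[x]$ with $F(1)=N_1(F)=N_3(F)=3$, $N_2(F)=3m$ and $M_{27}(F)=3^4m$. (ii) If $m=N_3(1+(x-1)^5h(x))$ for some $h\in\mathbb Z[x]$ with $3\nmid h(1)$, then there is $F\in\mathbb Z[x]$ with $F(1)=N_1(F)=N_2(F)=3$, $N_3(F)=3m$ and $M_{27}(F)=3^4m$.
   Context: $M_{27}(F)=\prod_{z^{27}=1}F(z)$. For $k\geq1$, $\omega_k=e^{2\pi i/3^k}$ and $N_k(F)=\prod_{1\leq \ell\leq 3^k,\ 3\nmid \ell}F(\omega_k^\ell)$. *)

From HB Require Import structures.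
From mathcomp Require Import all_boot all_order all_algebra all_field.
Set Implicit Arguments. Unset Strict Implicit. Unset Printing Implicit Defensive.
Import Order.TTheory GRing.Theory Num.Theory.
Local Open Scope ring_scope.

(* omega k = e^{2 pi i / 3^k} inside the algebraic complex numbers algC:
   n.-root (-1) is the n-th root of -1 of minimal non-negative argument,
   i.e. e^{i pi / n}; its square is e^{2 pi i / n}. *)
Definition omega (k : nat) : algC := ((3 ^ k)%N.-root (-1)) ^+ 2.

Definition evalZ (F : {poly int}) (z : algC) : algC :=
  (map_poly (fun c : int => c%:~R) F).[z].

Definition Nk (k : nat) (F : {poly int}) : algC :=
  \prod_(1 <= l < (3 ^ k).+1 | ~~ (3 %| l)%N) evalZ F (omega k ^+ l).

(* M_27(F) = prod_{z^27 = 1} F(z); the 27th roots of unity are exactly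
   omega_3^l for 0 <= l < 27. *)
Definition M27 (F : {poly int}) : algC :=
  \prod_(l < 27) evalZ F (omega 3 ^+ l).

From HB Require Import structures.
From Stdlib Require Import ZArith.
From mathcomp Require Import all_boot all_order all_algebra all_field.
From mathcomp Require Import ssrZ ring zify.
Set Implicit Arguments. Unset Strict Implicit. Unset Printing Implicit Defensive.
Import Order.TTheory GRing.Theory Num.Theory.
Local Open Scope ring_scope.

(* Write h = r0 + r1 (x - 1) + r2 (x - 1)^2 + 3 C + (x - 1)^3 H with r0 in {1, 2} and
   r1, r2 in {0, 1, 2}, and let G = 1 + (x - 1)^5 h.  For the target level t in {2, 3}
   and each of the 18 residue triples (r0, r1, r2) an explicit certificate provides
   integer polynomials A, B, E and an exponent j prime to 3 such that
   F = A + B C(x^j) + E H(x^j) satisfies F(1) = 3 and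
     F = T_t G(x^j) mod Phi_(3^t),   F = T_k mod Phi_(3^k) for k <> t,
   where each T_k = +-x^e (1 - x) prod_b (1 - x^b)/(1 - x), with 3 not dividing b; these
   congruences are checked by computation.  Over the primitive 3^k-th roots of unity,
   +-x^e and the cyclotomic units (1 - x^b)/(1 - x) have norm 1, 1 - x has norm 3, and
   x |-> x^j permutes the roots, so N_t(F) = 3 N_t(G) = 3 m and N_k(F) = 3 for k <> t;
   finally M_27(F) = F(1) N_1(F) N_2(F) N_3(F) = 3^4 m. *)

Lemma prim_root_pfactor (R : idomainType) p k (z : R) : prime p ->
  z ^+ (p ^ k.+1) = 1 -> z ^+ (p ^ k) != 1 -> (p ^ k.+1).-primitive_root z.
Proof.
move=> p_pr zp1 zp_neq1.
have pk_gt0 : (0 < p ^ k.+1)%N by rewrite expn_gt0 prime_gt0.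
have [m prim_m /(dvdn_pfactor _ _ p_pr)[i]] := prim_order_exists pk_gt0 zp1.
rewrite leq_eqVlt ltnS => /predU1P[-> <- //|lt_ik m_def].
by move: zp_neq1; rewrite -(prim_order_dvd prim_m) m_def dvdn_exp2l.
Qed.

Section CubeRoots.
Variable C : numClosedFieldType.
Implicit Types (a b w : C).

Lemma Re_Im_cube a b : a \is Num.real -> b \is Num.real ->
  'Re ((a + 'i * b) ^+ 3) = a ^+ 3 - 3 * a * b ^+ 2 /\
  'Im ((a + 'i * b) ^+ 3) = 3 * a ^+ 2 * b - b ^+ 3.
Proof.
move=> ra rb.
have -> : (a + 'i * b) ^+ 3 = (a ^+ 3 - 3 * a * b ^+ 2) + 'i * (3 * a ^+ 2 * b - b ^+ 3).
  have -> : (a + 'i * b) ^+ 3 = a ^+ 3 + 3 * a ^+ 2 * b * 'i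
      + 3 * a * b ^+ 2 * 'i ^+ 2 + b ^+ 3 * 'i * 'i ^+ 2 by ring.
  rewrite sqrCi; ring.
by rewrite Re_rect ?Im_rect // ?rpredB ?rpredM ?rpredX ?rpred_nat.
Qed.

Let rho : C := - 2^-1 + 'i * - (sqrtC 3 / 2).

Lemma rho_cube : rho ^+ 3 = 1.
Proof.
have s2 : sqrtC 3 ^+ 2 = 3 :> C by rewrite sqrtCK.
have two0 : (2 : C) != 0 by rewrite pnatr_eq0.
have -> : rho ^+ 3 = (- 1 - 3 * 'i * sqrtC 3 - 3 * 'i ^+ 2 * sqrtC 3 ^+ 2
    - 'i * 'i ^+ 2 * sqrtC 3 * sqrtC 3 ^+ 2) / 8.
  by rewrite /rho; field.
rewrite sqrCi s2.
have -> : - 1 - 3 * 'i * sqrtC 3 - 3 * -1 * 3 - 'i * -1 * sqrtC 3 * 3 = 8 :> C by ring.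
by rewrite divff // pnatr_eq0.
Qed.

Lemma Re_lt_Re_cube_root w : `|w| = 1 -> w != 1 -> 0 <= 'Im w ->
  'Re w < 'Re (3.-root w).
Proof.
move=> nw w_neq1 Iw; set y := 3.-root w.
have y3 : y ^+ 3 = w by rewrite rootCK.
have max v : v ^+ 3 = w -> 0 <= 'Im v -> 'Re v <= 'Re y by move=> *; apply: rootC_Re_max.
have Ib : 0 <= 'Im y by apply: Im_rootC_ge0.
have ny : `|y| = 1 by apply/eqP; rewrite -(@pexpr_eq1 _ _ 3) // -normrX y3 nw.
have := Crect y; have ra := Creal_Re y; have rb := Creal_Im y.
move: ra rb max Ib; set a := 'Re y; set b := 'Im y => ra rb max Ib y_def.
have ab1 : a ^+ 2 + b ^+ 2 = 1 by rewrite -normC2_Re_Im ny expr1n.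
have [Rew Imw] := Re_Im_cube ra rb; rewrite -y_def y3 in Rew Imw.
pose s : C := sqrtC 3.
have s_gt0 : 0 < s by rewrite sqrtC_gt0 ltr0n.
have rs : s \is Num.real by apply: gtr0_real.
have r2 : (2 : C)^-1 \is Num.real by rewrite rpredV rpred_nat.
have [Rev Imv] : 'Re (y * rho) = (- a + b * s) / 2 /\ 'Im (y * rho) = (- a * s - b) / 2.
  rewrite ReM ImM y_def /rho !Re_rect ?Im_rect ?(rpredN, rpredM, rpredD) //.
  by rewrite /s; split; field.
(* [y * rho] is another cube root of [w], so the maximality of [y] bounds it; this
   forces [0 < b] and [0 < a], whence [Re w = a (4 a^2 - 3) < a]. *)
have rot : 0 <= - a * s - b -> - a + b * s <= 2 * a.
  move=> Iv; have := max (y * rho); rewrite exprMn y3 rho_cube mulr1 Imv Rev.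
  move/(_ erefl (divr_ge0 Iv (ler0n _ 2))).
  by rewrite ler_pdivrMr ?ltr0n // [a * 2]mulrC.
have b_gt0 : 0 < b.
  rewrite lt_def Ib andbT; apply/eqP => b0.
  have /orP[/eqP a1|/eqP aN1] : (a == 1) || (a == -1).
    by rewrite -sqrf_eq1 -ab1 b0 expr0n addr0.
    by move: w_neq1; rewrite -y3 y_def a1 b0 mulr0 addr0 expr1n eqxx.
  have := rot; rewrite aN1 b0 opprK mul1r subr0 mul0r addr0 => /(_ (ltW s_gt0)).
  by rewrite mulrN1 => /(le_trans ler01); rewrite oppr_ge0 lern0.
have a_gt0 : 0 < a.
  rewrite real_ltNge ?real0 //; apply/negP => a_le0.
  have as_ge0 : 0 <= - a * s by rewrite mulr_ge0 ?oppr_ge0 // ltW.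
  have b_le : b <= - a * s.
    rewrite -(ler_sqr (ltW b_gt0) as_ge0) exprMn sqrrN sqrtCK -subr_ge0 mulrC.
    by rewrite -(pmulr_rge0 _ b_gt0) (_ : b * _ = 'Im w) // Imw; ring.
  have := rot; rewrite subr_ge0 => /(_ b_le); rewrite -subr_ge0.
  have -> : 2 * a - (- a + b * s) = 3 * a - b * s by ring.
  rewrite real_leNgt ?real0 ?rpredB ?rpredM ?rpred_nat // subr_lt0.
  by rewrite (le_lt_trans _ (mulr_gt0 b_gt0 s_gt0)) // mulr_ge0_le0 ?ler0n.
rewrite Rew -subr_gt0.
have -> : a - (a ^+ 3 - 3 * a * b ^+ 2) = 4 * a * b ^+ 2 + a * (1 - (a ^+ 2 + b ^+ 2)).
  by ring.
by rewrite ab1 subrr mulr0 addr0 !mulr_gt0 ?exprn_gt0 ?ltr0n.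
Qed.
End CubeRoots.

Lemma omega_prim_root k : (0 < k)%N -> (3 ^ k).-primitive_root (omega k).
Proof.
case: k => // k _; set M := (3 ^ k)%N; set r := (3 ^ k.+1).-root (-1 : algC).
have M_gt0 : (0 < M)%N by rewrite expn_gt0.
have rN1 : r ^+ (3 ^ k.+1) = -1 by rewrite rootCK // expn_gt0.
apply: prim_root_pfactor => //; first by rewrite /omega -exprM mulnC exprM rN1 sqrrN expr1n.
rewrite /omega -/r; apply/eqP => r2M1.
(* Then [r] is an [M]-th root of [-1], but the cube root [z] of the principal one [s]
   is a [3M]-th root of [-1] with [Re s < Re z <= Re r <= Re s]. *)
have rM : r ^+ M = -1.
  have : r ^+ (3 ^ k.+1) = r ^+ M * (r ^+ 2) ^+ M.
    by rewrite -exprM -exprD expnS; congr (_ ^+ _); lia.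
  by rewrite r2M1 mulr1 rN1.
set s := M.-root (-1 : algC); set z := 3.-root s.
have sM : s ^+ M = -1 by rewrite rootCK.
have Re_rs : 'Re r <= 'Re s.
  by apply: rootC_Re_max; rewrite // Im_rootC_ge0 // -{1}(expn0 3) ltn_exp2l.
have Re_zr : 'Re z <= 'Re r.
  apply: rootC_Re_max; rewrite ?expn_gt0 ?Im_rootC_ge0 //.
  by rewrite expnS exprM rootCK.
have ns : `|s| = 1 by apply/eqP; rewrite -(@pexpr_eq1 _ _ M) // -normrX sM normrN1.
have s_neq1 : s != 1.
  apply/eqP => s1; move: sM; rewrite s1 expr1n => /eqP.
  by rewrite -subr_eq0 opprK -[1 + 1]/(2%:R) pnatr_eq0.
have Is : 0 <= 'Im s.
  rewrite /s; have [M_le1|M_gt1] := leqP M 1; last exact: Im_rootC_ge0.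
  have -> : M = 1%N by apply/anti_leq; rewrite M_le1.
  by rewrite root1C (Creal_ImP _ (rpredN1 _)).
have := Re_lt_Re_cube_root ns s_neq1 Is; rewrite -/z.
by rewrite real_ltNge ?Creal_Re // (le_trans Re_zr Re_rs).
Qed.

Definition prim_prod (R : pzSemiRingType) (S : comPzSemiRingType) (k : nat)
    (f : R -> S) (z : R) : S :=
  \prod_(1 <= l < (3 ^ k).+1 | ~~ (3 %| l)%N) f (z ^+ l).

Lemma big_nat_mul3 (S : comPzSemiRingType) (g : nat -> S) M :
  \prod_(0 <= l < M * 3) g l = \prod_(0 <= i < M) (g (i * 3)%N * g (i * 3).+1 * g (i * 3).+2).
Proof.
rewrite big_nat_mul; apply: eq_bigr => i _.
by rewrite mulSn addnC /index_iota addKn /= !big_cons big_nil mulr1 mulrA.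
Qed.

Lemma coprime_mulmod_inj n j a b : coprime j n -> (a < n)%N -> (b < n)%N ->
  (j * a = j * b %[mod n])%N -> a = b.
Proof.
move=> co_jn an bn.
wlog le_ab : a b an bn / (a <= b)%N => [hw|].
  by case: (leqP a b) => [|/ltnW] h eq_ab; [|symmetry]; apply: hw.
move/eqP; rewrite eq_sym eqn_mod_dvd ?leq_mul2l ?le_ab ?orbT // -mulnBr.
rewrite Gauss_dvdr; last by rewrite coprime_sym.
by rewrite /dvdn modn_small => [/eqP|]; lia.
Qed.

Lemma expn3_pred k : (0 < k)%N -> (3 ^ k = 3 ^ k.-1 * 3)%N.
Proof. by move=> k_gt0; rewrite -expnSr prednK. Qed.

Lemma coprime_pow3 b k : ~~ (3 %| b)%N -> coprime b (3 ^ k).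
Proof. by move=> b3; rewrite coprime_sym coprimeXl // prime_coprime. Qed.

Lemma has_witness (T : Type) (a : pred T) (s : seq T) : has a s -> exists x, a x.
Proof. by elim: s => //= x s IHs /orP[ax|/IHs //]; exists x. Qed.

Section PrimProd.
Variables (R : pzSemiRingType) (S : comPzSemiRingType) (k : nat).
Hypothesis k_gt0 : (0 < k)%N.
Local Notation M := (3 ^ k.-1)%N.
Implicit Types (f g : R -> S) (z : R).

Lemma prim_prodE f z :
  prim_prod k f z = \prod_(0 <= l < 3 ^ k | ~~ (3 %| l)%N) f (z ^+ l).
Proof.
rewrite /prim_prod big_mkcond [RHS]big_mkcond big_nat_recr ?expn_gt0 //=.
rewrite [RHS]big_ltn ?expn_gt0 //=.
by rewrite (expn3_pred k_gt0) dvdn_mull // mul1r mulr1.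
Qed.

Lemma prim_prod_blocks f z :
  prim_prod k f z = \prod_(0 <= i < M) (f (z ^+ (i * 3).+1) * f (z ^+ (i * 3).+2)).
Proof.
rewrite prim_prodE big_mkcond (expn3_pred k_gt0) big_nat_mul3; apply: eq_bigr => i _.
have [-> -> ->] : [/\ 3 %| i * 3, 3 %| (i * 3).+1 = false & 3 %| (i * 3).+2 = false]%N.
  by split; [rewrite dvdn_mull | apply/negbTE..]; lia.
by rewrite mul1r.
Qed.

Lemma prod_powers_split f z : \prod_(0 <= l < 3 ^ k) f (z ^+ l) =
  \prod_(0 <= i < M) f ((z ^+ 3) ^+ i) * prim_prod k f z.
Proof.
rewrite prim_prod_blocks -big_split (expn3_pred k_gt0) big_nat_mul3; apply: eq_bigr => i _.
by rewrite -exprM mulnC -mulrA.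
Qed.

Lemma eq_prim_prod f g z : (forall l, ~~ (3 %| l)%N -> f (z ^+ l) = g (z ^+ l)) ->
  prim_prod k f z = prim_prod k g z.
Proof. exact: eq_bigr. Qed.

Lemma prim_prod_mul f g z :
  prim_prod k (fun x => f x * g x) z = prim_prod k f z * prim_prod k g z.
Proof. exact: big_split. Qed.

Lemma prim_prodXl f n z : prim_prod k (fun x => f x ^+ n) z = prim_prod k f z ^+ n.
Proof. exact: prodrXl. Qed.

Lemma prim_prod_prod (I : Type) (r : seq I) (g : I -> R -> S) z :
  prim_prod k (fun x => \prod_(i <- r) g i x) z = \prod_(i <- r) prim_prod k (g i) z.
Proof. exact: exchange_big. Qed.

Lemma prim_prod_const (c : S) z : prim_prod k (fun=> c) z = (c * c) ^+ M.
Proof. by rewrite prim_prod_blocks prodr_const_nat subn0. Qed.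

Lemma prim_prod_twist j f z : coprime j (3 ^ k) -> z ^+ (3 ^ k) = 1 ->
  prim_prod k (fun x => f (x ^+ j)) z = prim_prod k f z.
Proof.
move=> co_j zn1; rewrite !prim_prodE !big_mkord; set n := (3 ^ k)%N.
have n_gt0 : (0 < n)%N by rewrite expn_gt0.
have d3n : (3 %| n)%N by rewrite /n (expn3_pred k_gt0) dvdn_mull.
have j3 : ~~ (3 %| j)%N.
  by rewrite -prime_coprime // coprime_sym -(coprime_pexpr _ _ k_gt0).
pose h (l : 'I_n) : 'I_n := Ordinal (ltn_pmod (j * l) n_gt0).
have h_inj : injective h.
  by move=> a b /(congr1 val) /(coprime_mulmod_inj co_j (ltn_ord a) (ltn_ord b)) /val_inj.
rewrite [RHS](reindex_inj h_inj); apply: eq_big => l /=.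
  rewrite [in RHS]/dvdn (modn_dvdm _ d3n) -[_ == 0%N]/(3 %| j * l)%N.
  by rewrite Euclid_dvdM // negb_or j3.
by rewrite expr_mod // mulnC exprM.
Qed.

End PrimProd.

Lemma prim_prod_id (S : comPzSemiRingType) k (z : S) : (0 < k)%N ->
  z ^+ (3 ^ k) = 1 -> prim_prod k id z = 1.
Proof.
move=> k_gt0 zn1; rewrite prim_prod_blocks // big_split /= [X in _ * X]big_nat_rev.
rewrite -big_split big_nat_cond big1 // => i /andP[/andP[_ lt_i] _] /=.
by rewrite -exprD -zn1 (expn3_pred k_gt0); congr (_ ^+ _); lia.
Qed.

Section PrimitiveRoots.
Variables (F : fieldType) (k : nat) (z : F).
Hypotheses (k_gt0 : (0 < k)%N) (prim_z : (3 ^ k).-primitive_root z).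
Local Notation M := (3 ^ k.-1)%N.

Lemma natr3_neq0 : 3%:R != 0 :> F.
Proof. by apply: (prim_root_dvd_eq0 prim_z); rewrite (expn3_pred k_gt0) dvdn_mull. Qed.

Lemma prim_prod_XsubC :
  prim_prod k (fun x => 'X - x%:P) z = 1 + 'X^M + 'X^(M * 2).
Proof.
have M_gt0 : (0 < M)%N by rewrite expn_gt0.
have prim_z3 : M.-primitive_root (z ^+ 3).
  have M_dvd : (M %| 3 ^ k)%N by rewrite (expn3_pred k_gt0) dvdn_mulr.
  by have := dvdn_prim_root prim_z M_dvd; rewrite (expn3_pred k_gt0) mulKn.
have := factor_Xn_sub_1 prim_z.
rewrite (prod_powers_split k_gt0 (fun x : F => 'X - x%:P)) factor_Xn_sub_1 // (expn3_pred k_gt0).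
have -> : 'X^(M * 3) - 1 = ('X^M - 1) * (1 + 'X^M + 'X^(M * 2)) :> {poly F}.
  by rewrite !exprM; ring.
by apply: mulfI; rewrite -polyC1 monic_neq0 // monicXnsubC.
Qed.

Lemma prim_prod_1subX : prim_prod k (fun x => 1 - x) z = 3%:R.
Proof.
have := congr1 (horner^~ 1) prim_prod_XsubC.
rewrite /prim_prod horner_prod !hornerE !expr1n (_ : 1 + 1 + 1 = 3%:R) => [<-|]; last by ring.
by apply: eq_bigr => l _; rewrite hornerXsubC.
Qed.

Lemma Phi_root_pow l : ~~ (3 %| l)%N -> 1 + (z ^+ l) ^+ M + (z ^+ l) ^+ (M * 2) = 0.
Proof.
move=> l3; set w := (z ^+ l) ^+ M.
have w3 : w ^+ 3 = 1.
  by apply/eqP; rewrite -!exprM -(prim_order_dvd prim_z) (expn3_pred k_gt0) dvdn_mull.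
have w_neq1 : w != 1.
  rewrite /w -exprM -(prim_order_dvd prim_z) (expn3_pred k_gt0) [(M * 3)%N]mulnC.
  by rewrite dvdn_pmul2r ?expn_gt0.
have : (w - 1) * (1 + w + w ^+ 2) = 0 by rewrite -[RHS](subrr 1) -{3}w3; ring.
by move/eqP; rewrite exprM -/w mulf_eq0 subr_eq0 (negbTE w_neq1) => /eqP.
Qed.

Lemma prim_prod_prim_root_eq (S : comPzSemiRingType) (f : F -> S) z' :
  (3 ^ k).-primitive_root z' -> prim_prod k f z' = prim_prod k f z.
Proof.
move=> prim_z'; have [i z'_def] := prim_rootP prim_z (prim_expr_order prim_z').
have co_i : coprime i (3 ^ k) by rewrite -(prim_root_exp_coprime _ prim_z) -z'_def.
rewrite z'_def -(prim_prod_twist k_gt0 f co_i (prim_expr_order prim_z)).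
by apply: eq_bigr => l _; rewrite exprAC.
Qed.

Lemma prim_prod_geom b : coprime b (3 ^ k) ->
  prim_prod k (fun x => \sum_(i < b) x ^+ i) z = 1.
Proof.
move=> co_b; apply: (mulIf natr3_neq0); rewrite mul1r -!prim_prod_1subX -prim_prod_mul.
rewrite -(prim_prod_twist k_gt0 (fun x => 1 - x) co_b (prim_expr_order prim_z)).
by apply: eq_bigr => l _; rewrite -[RHS]opprB subrX1 [in RHS]mulrC -mulrN opprB.
Qed.

End PrimitiveRoots.

(* Integer polynomials as little-endian coefficient lists over [Z], so that the
   congruences of the certificates are decided by [vm_compute]. *)
Section ZLists.
Local Open Scope Z_scope.

Fixpoint addZ (p q : seq Z) : seq Z :=
  match p, q with
  | [::], _ => q
  | _, [::] => p
  | a :: p', b :: q' => a + b :: addZ p' q'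
  end.
Definition scaleZ (c : Z) (p : seq Z) : seq Z := map (Z.mul c) p.
Definition subZ (p q : seq Z) : seq Z := addZ p (scaleZ (-1) q).
Definition mulZ (p q : seq Z) : seq Z := foldr (fun a r => addZ (scaleZ a q) (0 :: r)) [::] p.
Definition XnZ (n : nat) : seq Z := rcons (nseq n 0) 1.
Definition sumZ (p : seq Z) : Z := foldr Z.add 0 p.

End ZLists.

Section HornerZ.
Variable R : comPzRingType.
Implicit Types (p q s : seq Z) (x : R).

Definition zcoef (c : Z) : R := (int_of_Z c)%:~R.

Definition hornerZ p x : R := foldr (fun c r => zcoef c + x * r) 0 p.

Lemma zcoef0 : zcoef Z.zero = 0.
Proof. by []. Qed.

Lemma zcoef1 : zcoef Z.one = 1.
Proof. by []. Qed.

Lemma zcoefD a b : zcoef (a + b) = zcoef a + zcoef b.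
Proof. by rewrite /zcoef -intrD -rmorphD. Qed.

Lemma zcoefM a b : zcoef (a * b) = zcoef a * zcoef b.
Proof. by rewrite /zcoef -intrM -rmorphM. Qed.

Lemma hornerZD p q x : hornerZ (addZ p q) x = hornerZ p x + hornerZ q x.
Proof.
elim: p q => [|a p IHp] [|b q] /=; rewrite ?add0r ?addr0 //.
by rewrite IHp zcoefD mulrDr addrACA.
Qed.

Lemma hornerZZ c p x : hornerZ (scaleZ c p) x = zcoef c * hornerZ p x.
Proof. by elim: p => [|a p IHp] /=; rewrite ?mulr0 // IHp zcoefM mulrDr mulrCA. Qed.

Lemma hornerZB p q x : hornerZ (subZ p q) x = hornerZ p x - hornerZ q x.
Proof. by rewrite hornerZD hornerZZ mulN1r. Qed.

Lemma hornerZM p q x : hornerZ (mulZ p q) x = hornerZ p x * hornerZ q x.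
Proof.
elim: p => [|a p IHp] /=; first by rewrite mul0r.
by rewrite hornerZD hornerZZ /= IHp add0r mulrDl mulrA.
Qed.

Lemma hornerZ_cat p q x : hornerZ (p ++ q) x = hornerZ p x + x ^+ size p * hornerZ q x.
Proof.
elim: p => [|a p IHp] /=; first by rewrite add0r mul1r.
by rewrite IHp mulrDr addrA exprS mulrA.
Qed.

Lemma hornerZ_nseq0 n x : hornerZ (nseq n Z.zero) x = 0.
Proof. by elim: n => //= n ->; rewrite mulr0 addr0. Qed.

Lemma hornerZXn n x : hornerZ (XnZ n) x = x ^+ n.
Proof.
by rewrite /XnZ -cats1 hornerZ_cat hornerZ_nseq0 size_nseq /= mulr0 addr0 add0r mulr1.
Qed.

Lemma hornerZ_geom b x : hornerZ (nseq b Z.one) x = \sum_(i < b) x ^+ i.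
Proof.
elim: b => [|b IHb] /=; first by rewrite big_ord0.
rewrite IHb big_ord_recl expr0 mulr_sumr; congr (_ + _).
by apply: eq_bigr => i _; rewrite exprS.
Qed.

Lemma hornerZC c x : hornerZ [:: c] x = zcoef c.
Proof. by rewrite /= mulr0 addr0. Qed.

Lemma hornerZ_sum p : hornerZ p 1 = zcoef (sumZ p).
Proof. by elim: p => //= c p ->; rewrite mul1r zcoefD. Qed.

Lemma hornerZ_all0 p x : all (eq_op^~ Z.zero) p -> hornerZ p x = 0.
Proof. by elim: p => //= a p IHp /andP[/eqP -> /IHp ->]; rewrite mulr0 addr0. Qed.

End HornerZ.
Arguments zcoef {R}.

Section CyclotomicReduction.
Local Open Scope Z_scope.

Definition cyc_reduce (M : nat) (s : seq Z) : seq Z :=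
  addZ (take (M * 2) s) (mulZ (subZ [:: -1] (XnZ M)) (drop (M * 2) s)).

(* Horner evaluation modulo [1 + x^M + x^(2M)], rewriting [x^(2M)] as [-1 - x^M]. *)
Definition cyc_rem (M : nat) (p : seq Z) : seq Z :=
  foldr (fun c r => addZ [:: c] (cyc_reduce M (0 :: r))) [::] p.

Definition cyc_eqb (M : nat) (p q : seq Z) : bool := all (eq_op^~ 0) (cyc_rem M (subZ p q)).

End CyclotomicReduction.

Section CyclotomicRoot.
Variables (R : comPzRingType) (M : nat) (x : R).
Hypothesis x_root : 1 + x ^+ M + x ^+ (M * 2) = 0.

Lemma hornerZ_cyc_reduce s : hornerZ (cyc_reduce M s) x = hornerZ s x.
Proof.
rewrite -[in RHS](cat_take_drop (M * 2) s) hornerZ_cat hornerZD hornerZM hornerZB hornerZXn.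
rewrite size_take; case: ltnP => [_|le_s]; last by rewrite drop_oversize // !mulr0.
have -> : x ^+ (M * 2) = - 1 - x ^+ M.
  by apply/eqP; rewrite -subr_eq0 -x_root; apply/eqP; ring.
by rewrite /= /zcoef /= mulr0 addr0.
Qed.

Lemma hornerZ_cyc_rem p : hornerZ (cyc_rem M p) x = hornerZ p x.
Proof.
elim: p => // c p IHp.
rewrite -[cyc_rem M _]/(addZ [:: c] (cyc_reduce M (Z.zero :: cyc_rem M p))).
by rewrite hornerZD hornerZ_cyc_reduce /= IHp zcoef0 mulr0 !addr0 add0r.
Qed.

Lemma cyc_eqbP p q : cyc_eqb M p q -> hornerZ p x = hornerZ q x.
Proof.
by move/(hornerZ_all0 x); rewrite hornerZ_cyc_rem hornerZB => /eqP; rewrite subr_eq0 => /eqP.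
Qed.

End CyclotomicRoot.

Record cyc_unit := CycUnit { cu_sign : bool; cu_exp : nat; cu_geoms : seq nat }.

Section CycUnitZ.
Local Open Scope Z_scope.

Definition cyc_unitZ (u : cyc_unit) : seq Z :=
  mulZ (scaleZ (if cu_sign u then -1 else 1) (XnZ (cu_exp u)))
    (mulZ [:: 1; -1] (foldr (fun b => mulZ (nseq b 1)) [:: 1] (cu_geoms u))).

End CycUnitZ.

Definition cyc_unit_ok (u : cyc_unit) : bool := all (fun b => ~~ (3 %| b)%N) (cu_geoms u).

Lemma hornerZ_cyc_unit (R : comPzRingType) u (x : R) :
  hornerZ (cyc_unitZ u) x =
  (-1) ^+ cu_sign u * x ^+ cu_exp u * (1 - x) * \prod_(b <- cu_geoms u) \sum_(i < b) x ^+ i.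
Proof.
case: u => s e bs /=; rewrite /cyc_unitZ !hornerZM hornerZZ hornerZXn [hornerZ [:: _; _] x]/=.
rewrite mulr0 addr0 (_ : zcoef _ = (-1) ^+ s); last by case: s; rewrite /zcoef /= ?mulrN1z.
rewrite mulrA; congr (_ * _); first by rewrite /= zcoef1 (_ : zcoef _ = -1) // mulrN1.
elim: bs => [|b bs IHbs]; first by rewrite big_nil /= mulr0 addr0 zcoef1.
by rewrite big_cons -IHbs -hornerZ_geom -hornerZM.
Qed.

Lemma prim_prod_cyc_unit (F : fieldType) k (z : F) u : (0 < k)%N ->
  (3 ^ k).-primitive_root z -> cyc_unit_ok u -> prim_prod k (hornerZ (cyc_unitZ u)) z = 3%:R.
Proof.
move=> k_gt0 prim_z /allP u_ok.
pose g (x : F) :=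
  (-1) ^+ cu_sign u * x ^+ cu_exp u * (1 - x) * \prod_(b <- cu_geoms u) \sum_(i < b) x ^+ i.
rewrite (@eq_prim_prod F F k _ g z) => [|l _]; last exact: hornerZ_cyc_unit.
rewrite /g !prim_prod_mul prim_prod_const // -expr2 sqrr_sign expr1n mul1r.
rewrite prim_prodXl // prim_prod_id ?(prim_expr_order prim_z) // expr1n mul1r.
rewrite prim_prod_1subX // prim_prod_prod // big1_seq ?mulr1 // => b /andP[_ /u_ok b3].
exact: prim_prod_geom (coprime_pow3 _ b3).
Qed.

Lemma zcoef_nat (R : comPzRingType) n : zcoef (Z.of_nat n) = n%:R :> R.
Proof. by rewrite /zcoef (_ : Z.of_nat n = Z_of_int n) // Z_of_intK. Qed.

Definition polyZ (s : seq Z) : {poly int} := Poly (map int_of_Z s).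

Lemma NkE k F : Nk k F = prim_prod k (evalZ F) (omega k).
Proof. by []. Qed.

Section EvalZ.
Variable x : algC.
Implicit Types p q : {poly int}.

Lemma evalZD p q : evalZ (p + q) x = evalZ p x + evalZ q x.
Proof. by rewrite /evalZ rmorphD hornerD. Qed.

Lemma evalZN p : evalZ (- p) x = - evalZ p x.
Proof. by rewrite /evalZ rmorphN hornerN. Qed.

Lemma evalZM p q : evalZ (p * q) x = evalZ p x * evalZ q x.
Proof. by rewrite /evalZ rmorphM hornerM. Qed.

Lemma evalZX p n : evalZ (p ^+ n) x = evalZ p x ^+ n.
Proof. by rewrite /evalZ rmorphXn horner_exp. Qed.

Lemma evalZ_nat n : evalZ n%:R x = n%:R.
Proof. by rewrite /evalZ rmorph_nat -polyC_natr hornerC. Qed.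

Lemma evalZ1 : evalZ 1 x = 1.
Proof. by rewrite /evalZ rmorph1 hornerC. Qed.

Lemma evalZ_X : evalZ 'X x = x.
Proof. by rewrite /evalZ map_polyX hornerX. Qed.

Lemma evalZ_comp p j : evalZ (p \Po 'X^j) x = evalZ p (x ^+ j).
Proof. by rewrite /evalZ map_comp_poly horner_comp map_polyXn hornerXn. Qed.

Lemma evalZ_polyZ s : evalZ (polyZ s) x = hornerZ s x.
Proof.
rewrite /evalZ /polyZ; elim: s => [|c s IHs] /=; first by rewrite rmorph0 horner0.
rewrite cons_poly_def rmorphD rmorphM /= map_polyX map_polyC /= hornerD hornerM hornerX.
by rewrite hornerC IHs addrC mulrC.
Qed.

End EvalZ.

Lemma evalZ_at1 (F : {poly int}) : evalZ F 1 = (F.[1])%:~R.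
Proof. by rewrite /evalZ -(rmorph1 (intr : int -> algC)) horner_map. Qed.

Lemma M27E F : M27 F = evalZ F 1 * Nk 1 F * Nk 2 F * Nk 3 F.
Proof.
set f := evalZ F; set w := omega 3.
have prim_w : (3 ^ 3).-primitive_root w by apply: omega_prim_root.
have prim_w3 : (3 ^ 2).-primitive_root (w ^+ 3).
  by have := dvdn_prim_root prim_w (isT : (3 ^ 2 %| 3 ^ 3)%N).
have prim_w9 : (3 ^ 1).-primitive_root ((w ^+ 3) ^+ 3).
  by have := dvdn_prim_root prim_w (isT : (3 ^ 1 %| 3 ^ 3)%N); rewrite -exprM.
rewrite /M27 -(big_mkord xpredT (fun l => f (w ^+ l))) (prod_powers_split (k := 3)) //.
rewrite (prod_powers_split (k := 2)) // (prod_powers_split (k := 1)) // big_nat1 expr0.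
have [k2 k1] : (0 < 2)%N /\ (0 < 1)%N by [].
rewrite !NkE (prim_prod_prim_root_eq k2 (omega_prim_root k2) f prim_w3).
by rewrite (prim_prod_prim_root_eq k1 (omega_prim_root k1) f prim_w9).
Qed.

Record cert := Cert {
  cert_level : nat;
  cert_res : nat * nat * nat;
  cert_twist : nat;
  cert_units : cyc_unit * cyc_unit * cyc_unit;
  cert_A : seq Z;
  cert_B : seq Z;
  cert_E : seq Z }.

Definition cert_unit (c : cert) (k : nat) : cyc_unit :=
  let: (u1, u2, u3) := cert_units c in if k == 1%N then u1 else if k == 2%N then u2 else u3.

Section CertCheck.
Local Open Scope Z_scope.
Variable c : cert.

Let y := subZ (XnZ (cert_twist c)) [:: 1].
Let y2 := mulZ y y.
Let y3 := mulZ y2 y.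
Let y5 := mulZ y3 y2.
Let res_poly := addZ [:: Z.of_nat (cert_res c).1.1]
  (addZ (scaleZ (Z.of_nat (cert_res c).1.2) y) (scaleZ (Z.of_nat (cert_res c).2) y2)).

Definition level_congr (k : nat) : bool :=
  let M := (3 ^ k.-1)%N in
  let T := cyc_unitZ (cert_unit c k) in
  if k == cert_level c then
    [&& cyc_eqb M (cert_A c) (mulZ T (addZ [:: 1] (mulZ y5 res_poly))),
        cyc_eqb M (cert_B c) (scaleZ 3 (mulZ T y5))
      & cyc_eqb M (cert_E c) (mulZ T (mulZ y5 y3))]
  else [&& cyc_eqb M (cert_A c) T, cyc_eqb M (cert_B c) [::] & cyc_eqb M (cert_E c) [::]].

Definition cert_ok : bool :=
  [&& sumZ (cert_A c) == 3, sumZ (cert_B c) == 0, sumZ (cert_E c) == 0,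
      ~~ (3 %| cert_twist c)%N
    & all (fun k => cyc_unit_ok (cert_unit c k) && level_congr k) [:: 1; 2; 3]%N].

End CertCheck.

Definition taylor_h (r : nat * nat * nat) (C H : {poly int}) : {poly int} :=
  r.1.1%:R + r.1.2%:R * ('X - 1) + r.2%:R * ('X - 1) ^+ 2 + 3%:R * C + ('X - 1) ^+ 3 * H.

Definition cert_poly (c : cert) (C H : {poly int}) : {poly int} :=
  polyZ (cert_A c) + polyZ (cert_B c) * (C \Po 'X^(cert_twist c))
    + polyZ (cert_E c) * (H \Po 'X^(cert_twist c)).

Lemma cert_poly_at1 c C H : cert_ok c -> (cert_poly c C H).[1] = 3.
Proof.
case/and5P => /eqP sA /eqP sB /eqP sE _ _; apply: (@intr_inj algC); rewrite -evalZ_at1.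
rewrite !(evalZD, evalZM, evalZ_polyZ) !hornerZ_sum sA sB sE.
by rewrite (zcoef_nat _ 3) (zcoef_nat _ 0) !mul0r !addr0.
Qed.

Lemma Nk_cert_poly c C H k : cert_ok c -> k \in [:: 1; 2; 3]%N ->
  Nk k (cert_poly c C H) =
  3 * (if k == cert_level c then Nk k (1 + ('X - 1) ^+ 5 * taylor_h (cert_res c) C H) else 1).
Proof.
case/and5P => _ _ _ j3 /allP levels k_in.
have k_gt0 : (0 < k)%N by move: k_in; rewrite !inE => /or3P[] /eqP ->.
have prim_z := omega_prim_root k_gt0.
case/andP: (levels k k_in) => u_ok.
rewrite !NkE -(prim_prod_cyc_unit k_gt0 prim_z u_ok) /level_congr.
set T := cyc_unitZ _; clearbody T.
case: ifP => _ /and3P[eqA eqB eqE]; last first.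
  rewrite mulr1; apply: eq_prim_prod => l /(Phi_root_pow k_gt0 prim_z) Phi.
  rewrite !(evalZD, evalZM, evalZ_polyZ) (cyc_eqbP Phi eqA) (cyc_eqbP Phi eqB).
  by rewrite (cyc_eqbP Phi eqE) /= !mul0r !addr0.
set G := 1 + _ * _.
rewrite -(prim_prod_twist k_gt0 (evalZ G) (coprime_pow3 k j3) (prim_expr_order prim_z)).
rewrite -prim_prod_mul; apply: eq_prim_prod => l /(Phi_root_pow k_gt0 prim_z) Phi.
rewrite !(evalZD, evalZM, evalZ_polyZ) (cyc_eqbP Phi eqA) (cyc_eqbP Phi eqB).
rewrite (cyc_eqbP Phi eqE) /G /taylor_h.
rewrite !(hornerZM, hornerZD, hornerZZ, hornerZB, hornerZXn, hornerZC, zcoef_nat, zcoef1).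
rewrite !evalZ_nat !(evalZD, evalZM, evalZX, evalZN, evalZ_X, evalZ_comp, evalZ1).
rewrite (zcoef_nat _ 3); ring.
Qed.

Lemma taylor1 (p : {poly int}) : exists q, p = (p.[1])%:P + ('X - 1) * q.
Proof.
have : root (p - (p.[1])%:P) 1 by rewrite rootE hornerD hornerN hornerC subrr.
by case/factor_theorem => q e; exists q; rewrite -polyC1 mulrC -e addrC subrK.
Qed.

Lemma mod3_natr (a : int) : ((`|(a %% 3)%Z|%N)%:R : int) = (a %% 3)%Z.
Proof. by rewrite natz gez0_abs // modz_ge0. Qed.

Lemma taylor_h_decomp (h : {poly int}) : ~~ (3 %| h.[1])%Z ->
  exists r C H, [/\ r.1.1 \in [:: 1; 2], r.1.2 < 3, r.2 < 3 & h = taylor_h r C H]%N.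
Proof.
move=> h3; have [q1 e1] := taylor1 h; have [q2 e2] := taylor1 q1; have [H e3] := taylor1 q2.
set a0 := h.[1] in e1 h3; set a1 := q1.[1] in e2; set a2 := q2.[1] in e3.
have res_lt3 (a : int) : (`|(a %% 3)%Z| < 3)%N.
  by have := ltz_pmod a (isT : (0 : int) < 3); rewrite -[X in X < _]mod3_natr ltr_nat.
exists (`|(a0 %% 3)%Z|, `|(a1 %% 3)%Z|, `|(a2 %% 3)%Z|)%N.
exists ((a0 %/ 3)%Z%:P + (a1 %/ 3)%Z%:P * ('X - 1) + (a2 %/ 3)%Z%:P * ('X - 1) ^+ 2), H.
split => //=.
  have := res_lt3 a0; have := mod3_natr a0; case: `|_|%N => [|[|[|]]] // a03 _.
  by case/negP: h3; apply/dvdz_mod0P; rewrite -a03.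
rewrite /taylor_h /= -!polyC_natr !mod3_natr e1 e2 e3.
rewrite {1}(divz_eq a0 3) {1}(divz_eq a1 3) {1}(divz_eq a2 3) !polyCD !polyCM.
ring.
Qed.

Section CertTable.
Local Open Scope Z_scope.

Definition certs : seq cert := [::
  Cert 2 (1, 0, 0)%N 1
    (CycUnit false 0 [::], CycUnit false 2 [::], CycUnit true 0 [:: 2; 7; 7]%N)
    [:: 0; -1; -4; 1; -6; 3; -5; 3; -1; 3; 3; 0; 5; -2; 6; -3; 3; -3; 1; 1; -2; 3; -4; 5;
        -3; 3; -3]
    [:: 3; 3; -7; 9; -12; 14; -12; 9; -7; 3; 3; -7; 9; -12; 14; -12; 9; -7; 3; 3; -7; 9;
        -12; 14; -12; 9; -7]
    [:: -21; 12; 0; -12; 21; -28; 33; -33; 28; -21; 12; 0; -12; 21; -28; 33; -33; 28; -21;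
        12; 0; -12; 21; -28; 33; -33; 28];
  Cert 2 (1, 0, 1)%N 1
    (CycUnit false 0 [::], CycUnit false 2 [:: 7]%N, CycUnit true 0 [:: 2; 7; 7; 7]%N)
    [:: 7; -9; 0; -11; -9; -9; -16; -6; -15; 4; -6; 9; 4; 12; 15; 8; 15; 0; 13; -3; 6; -4;
        0; 2; -3; 6; -7]
    [:: 4; -2; 3; -2; -2; 3; -2; 4; -6; 4; -2; 3; -2; -2; 3; -2; 4; -6; 4; -2; 3; -2; -2; 3;
        -2; 4; -6]
    [:: -12; 12; -9; 7; -5; 0; 5; -7; 9; -12; 12; -9; 7; -5; 0; 5; -7; 9; -12; 12; -9; 7;
        -5; 0; 5; -7; 9];
  Cert 2 (1, 0, 2)%N 1
    (CycUnit false 0 [::], CycUnit false 2 [:: 4]%N, CycUnit false 0 [:: 2; 2; 2; 5]%N)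
    [:: -12; 22; -21; 25; -23; 18; -13; 1; 4; -13; 19; -24; 24; -23; 19; -10; 4; 5; -13; 19;
        -24; 24; -23; 19; -10; 4; 5]
    [:: -7; 8; -8; 8; -7; 4; -1; -1; 4; -7; 8; -8; 8; -7; 4; -1; -1; 4; -7; 8; -8; 8; -7; 4;
        -1; -1; 4]
    [:: 7; -14; 19; -21; 21; -19; 14; -7; 0; 7; -14; 19; -21; 21; -19; 14; -7; 0; 7; -14;
        19; -21; 21; -19; 14; -7];
  Cert 2 (1, 1, 0)%N 1
    (CycUnit false 0 [::], CycUnit false 2 [::], CycUnit false 2 [::])
    [:: -2; 1; 2; -3; 3; -4; 5; -4; 3; -2; 1; 1; -2; 3; -4; 5; -4; 3; -2; 1; 1; -2; 3; -4;
        5; -4; 3]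
    [:: 3; 3; -7; 9; -12; 14; -12; 9; -7; 3; 3; -7; 9; -12; 14; -12; 9; -7; 3; 3; -7; 9;
        -12; 14; -12; 9; -7]
    [:: -21; 12; 0; -12; 21; -28; 33; -33; 28; -21; 12; 0; -12; 21; -28; 33; -33; 28; -21;
        12; 0; -12; 21; -28; 33; -33; 28];
  Cert 2 (1, 1, 1)%N 1
    (CycUnit false 0 [::], CycUnit false 2 [:: 7]%N, CycUnit true 0 [:: 2]%N)
    [:: 4; -4; 4; -2; 1; 1; -2; 3; -4; 5; -4; 3; -2; 1; 1; -2; 3; -4; 5; -4; 3; -2; 1; 1;
        -2; 3; -4]
    [:: 4; -2; 3; -2; -2; 3; -2; 4; -6; 4; -2; 3; -2; -2; 3; -2; 4; -6; 4; -2; 3; -2; -2; 3;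
        -2; 4; -6]
    [:: -12; 12; -9; 7; -5; 0; 5; -7; 9; -12; 12; -9; 7; -5; 0; 5; -7; 9; -12; 12; -9; 7;
        -5; 0; 5; -7; 9];
  Cert 2 (1, 1, 2)%N 1
    (CycUnit false 0 [::], CycUnit false 2 [:: 4]%N, CycUnit false 2 [:: 4]%N)
    [:: -9; 15; -17; 19; -18; 15; -10; 3; 3; -9; 15; -18; 19; -18; 15; -9; 3; 3; -9; 15;
        -18; 19; -18; 15; -9; 3; 3]
    [:: -7; 8; -8; 8; -7; 4; -1; -1; 4; -7; 8; -8; 8; -7; 4; -1; -1; 4; -7; 8; -8; 8; -7; 4;
        -1; -1; 4]
    [:: 7; -14; 19; -21; 21; -19; 14; -7; 0; 7; -14; 19; -21; 21; -19; 14; -7; 0; 7; -14;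
        19; -21; 21; -19; 14; -7];
  Cert 2 (1, 2, 0)%N 1
    (CycUnit false 0 [::], CycUnit false 2 [::], CycUnit false 1 [:: 4; 5; 5]%N)
    [:: -4; 3; 7; -5; 13; -10; 15; -11; 7; -8; -2; 2; -10; 8; -14; 13; -11; 9; -4; 2; 5; -8;
        9; -14; 13; -11; 9]
    [:: 3; 3; -7; 9; -12; 14; -12; 9; -7; 3; 3; -7; 9; -12; 14; -12; 9; -7; 3; 3; -7; 9;
        -12; 14; -12; 9; -7]
    [:: -21; 12; 0; -12; 21; -28; 33; -33; 28; -21; 12; 0; -12; 21; -28; 33; -33; 28; -21;
        12; 0; -12; 21; -28; 33; -33; 28];
  Cert 2 (1, 2, 1)%N 1
    (CycUnit false 0 [::], CycUnit false 2 [:: 7]%N, CycUnit true 0 [:: 2; 4; 4; 4]%N)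
    [:: -1; -5; -2; -5; -3; -2; 1; 5; 4; 5; 1; 4; 2; 3; 0; -1; -1; -3; 0; -2; 3; 2; 3; 0;
        -1; -1; -3]
    [:: 4; -2; 3; -2; -2; 3; -2; 4; -6; 4; -2; 3; -2; -2; 3; -2; 4; -6; 4; -2; 3; -2; -2; 3;
        -2; 4; -6]
    [:: -12; 12; -9; 7; -5; 0; 5; -7; 9; -12; 12; -9; 7; -5; 0; 5; -7; 9; -12; 12; -9; 7;
        -5; 0; 5; -7; 9];
  Cert 2 (1, 2, 2)%N 1
    (CycUnit false 0 [::], CycUnit false 2 [:: 4]%N, CycUnit false 0 [:: 5; 5; 5; 5]%N)
    [:: -3; 16; -3; 26; 2; 26; 5; 12; 5; -9; 1; -25; -1; -28; -1; -17; -3; -1; -4; 13; -9;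
        16; -13; 9; -11]
    [:: -7; 8; -8; 8; -7; 4; -1; -1; 4; -7; 8; -8; 8; -7; 4; -1; -1; 4; -7; 8; -8; 8; -7; 4;
        -1; -1; 4]
    [:: 7; -14; 19; -21; 21; -19; 14; -7; 0; 7; -14; 19; -21; 21; -19; 14; -7; 0; 7; -14;
        19; -21; 21; -19; 14; -7];
  Cert 2 (2, 0, 0)%N 2
    (CycUnit false 0 [::], CycUnit false 2 [:: 7]%N, CycUnit true 0 [:: 2]%N)
    [:: 4; -6; -5; 5; 8; -2; -9; -2; 8; 5; -6; -6; 5; 8; -2; -9; -2; 8; 5; -6; -6; 5; 8; -2;
        -9; -2; 8]
    [:: 7; -9; -9; 7; 12; -3; -14; -3; 12; 7; -9; -9; 7; 12; -3; -14; -3; 12; 7; -9; -9; 7;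
        12; -3; -14; -3; 12]
    [:: 0; 33; 12; -28; -21; 21; 28; -12; -33; 0; 33; 12; -28; -21; 21; 28; -12; -33; 0; 33;
        12; -28; -21; 21; 28; -12; -33];
  Cert 2 (2, 0, 1)%N 2
    (CycUnit false 0 [::], CycUnit false 2 [::], CycUnit false 2 [::])
    [:: -11; -14; 7; 15; -1; -16; -4; 15; 10; -11; -14; 6; 16; -1; -16; -4; 15; 10; -11;
        -14; 6; 16; -1; -16; -4; 15; 10]
    [:: -4; -8; 1; 8; 1; -8; -4; 7; 7; -4; -8; 1; 8; 1; -8; -4; 7; 7; -4; -8; 1; 8; 1; -8;
        -4; 7; 7]
    [:: 19; 14; -14; -19; 7; 21; 0; -21; -7; 19; 14; -14; -19; 7; 21; 0; -21; -7; 19; 14;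
        -14; -19; 7; 21; 0; -21; -7];
  Cert 2 (2, 0, 2)%N 2
    (CycUnit false 0 [::], CycUnit false 2 [:: 4]%N, CycUnit false 2 [:: 4]%N)
    [:: 15; -2; -15; -5; 12; 8; -10; -10; 8; 15; -2; -16; -5; 12; 8; -9; -10; 8; 15; -2;
        -16; -5; 12; 8; -9; -10; 8]
    [:: 6; 2; -4; -3; 2; 2; -3; -4; 2; 6; 2; -4; -3; 2; 2; -3; -4; 2; 6; 2; -4; -3; 2; 2;
        -3; -4; 2]
    [:: -9; 5; 12; 0; -12; -5; 9; 7; -7; -9; 5; 12; 0; -12; -5; 9; 7; -7; -9; 5; 12; 0; -12;
        -5; 9; 7; -7];
  Cert 2 (2, 1, 0)%N 2
    (CycUnit false 0 [::], CycUnit false 2 [:: 7]%N, CycUnit true 0 [:: 2; 4; 4; 4]%N)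
    [:: -1; -2; -4; -5; -3; 0; 1; 2; 4; 5; 4; 2; 2; 3; 2; -1; -4; -3; 0; 1; 1; 2; 3; 2; -1;
        -4; -3]
    [:: 7; -9; -9; 7; 12; -3; -14; -3; 12; 7; -9; -9; 7; 12; -3; -14; -3; 12; 7; -9; -9; 7;
        12; -3; -14; -3; 12]
    [:: 0; 33; 12; -28; -21; 21; 28; -12; -33; 0; 33; 12; -28; -21; 21; 28; -12; -33; 0; 33;
        12; -28; -21; 21; 28; -12; -33];
  Cert 2 (2, 1, 1)%N 2
    (CycUnit false 0 [::], CycUnit false 2 [::], CycUnit false 1 [:: 4; 5; 5]%N)
    [:: -6; -7; 7; 13; 2; -8; -1; 10; 5; -10; -12; 2; 8; -3; -12; -3; 10; 7; -6; -8; 5; 10;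
        -2; -12; -3; 10; 7]
    [:: -4; -8; 1; 8; 1; -8; -4; 7; 7; -4; -8; 1; 8; 1; -8; -4; 7; 7; -4; -8; 1; 8; 1; -8;
        -4; 7; 7]
    [:: 19; 14; -14; -19; 7; 21; 0; -21; -7; 19; 14; -14; -19; 7; 21; 0; -21; -7; 19; 14;
        -14; -19; 7; 21; 0; -21; -7];
  Cert 2 (2, 1, 2)%N 2
    (CycUnit false 0 [::], CycUnit false 2 [:: 4]%N, CycUnit false 0 [:: 5; 5; 5; 5]%N)
    [:: 14; 4; -3; 9; 25; 21; 5; 1; 10; 8; -11; -25; -18; -5; -6; -17; -14; 4; 13; 1; -9;
        -1; 10; 4; -11; -11; 5]
    [:: 6; 2; -4; -3; 2; 2; -3; -4; 2; 6; 2; -4; -3; 2; 2; -3; -4; 2; 6; 2; -4; -3; 2; 2;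
        -3; -4; 2]
    [:: -9; 5; 12; 0; -12; -5; 9; 7; -7; -9; 5; 12; 0; -12; -5; 9; 7; -7; -9; 5; 12; 0; -12;
        -5; 9; 7; -7];
  Cert 2 (2, 2, 0)%N 2
    (CycUnit false 0 [::], CycUnit false 2 [:: 7]%N, CycUnit true 0 [:: 2; 7; 7; 7]%N)
    [:: -3; 5; 0; -13; -16; -7; -4; -13; -17; -6; 8; 9; 2; 5; 17; 20; 8; -2; 3; 11; 6; -6;
        -7; 4; 9; -1; -9]
    [:: 7; -9; -9; 7; 12; -3; -14; -3; 12; 7; -9; -9; 7; 12; -3; -14; -3; 12; 7; -9; -9; 7;
        12; -3; -14; -3; 12]
    [:: 0; 33; 12; -28; -21; 21; 28; -12; -33; 0; 33; 12; -28; -21; 21; 28; -12; -33; 0; 33;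
        12; -28; -21; 21; 28; -12; -33];
  Cert 2 (2, 2, 1)%N 2
    (CycUnit false 0 [::], CycUnit false 2 [::], CycUnit true 0 [:: 2; 7; 7]%N)
    [:: -5; -6; 1; 3; -3; -7; -2; 5; 4; -2; -2; 5; 7; 1; -4; 0; 5; 2; -4; -4; 3; 5; -1; -5;
        0; 5; 2]
    [:: -4; -8; 1; 8; 1; -8; -4; 7; 7; -4; -8; 1; 8; 1; -8; -4; 7; 7; -4; -8; 1; 8; 1; -8;
        -4; 7; 7]
    [:: 19; 14; -14; -19; 7; 21; 0; -21; -7; 19; 14; -14; -19; 7; 21; 0; -21; -7; 19; 14;
        -14; -19; 7; 21; 0; -21; -7];
  Cert 2 (2, 2, 2)%N 2
    (CycUnit false 0 [::], CycUnit false 2 [:: 4]%N, CycUnit false 0 [:: 2; 2; 2; 5]%N)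
    [:: 9; 0; -7; -1; 8; 4; -8; -8; 4; 8; -3; -10; -2; 8; 5; -5; -5; 5; 8; -3; -10; -2; 8;
        5; -5; -5; 5]
    [:: 6; 2; -4; -3; 2; 2; -3; -4; 2; 6; 2; -4; -3; 2; 2; -3; -4; 2; 6; 2; -4; -3; 2; 2;
        -3; -4; 2]
    [:: -9; 5; 12; 0; -12; -5; 9; 7; -7; -9; 5; 12; 0; -12; -5; 9; 7; -7; -9; 5; 12; 0; -12;
        -5; 9; 7; -7];
  Cert 3 (1, 0, 0)%N 2
    (CycUnit false 0 [::], CycUnit true 0 [:: 2]%N, CycUnit false 2 [:: 7]%N)
    [:: 0; 2; 2; 0; 0; 0; -3; 0; 5; 0; -3; -3; 1; 5; 0; -3; 0; 0; 0; 1; 2; 0; -5; 0; 7; 0;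
        -5]
    [:: -1; 6; 3; -1; 0; 0; -10; 0; 15; 2; -9; -9; 2; 15; 0; -10; 0; 0; -1; 3; 6; -1; -15;
        0; 20; 0; -15]
    [:: 0; -42; -2; 28; 4; -12; 0; 3; -14; -1; 28; 5; -28; -16; 16; 28; -5; -28; 1; 14; -3;
        0; 12; -4; -28; 2; 42];
  Cert 3 (1, 0, 1)%N 2
    (CycUnit false 0 [::], CycUnit false 2 [:: 4]%N, CycUnit false 2 [:: 4]%N)
    [:: -2; 3; 0; 8; 8; -11; -20; 7; 22; -2; -6; 1; -15; -4; 22; 10; -14; -11; 5; 3; 0; 8;
        -4; -11; 10; 7; -11]
    [:: 0; -5; -2; 9; 10; -5; -18; 1; 10; 0; 10; 1; -18; -5; 10; 9; -2; -5; 0; -5; 1; 9; -5;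
        -5; 9; 1; -5]
    [:: 9; -14; -2; 0; -5; 14; 18; -16; -32; 9; 28; -3; 0; 3; -28; -9; 32; 16; -18; -14; 5;
        0; 2; 14; -9; -16; 16];
  Cert 3 (1, 0, 2)%N 2
    (CycUnit false 0 [::], CycUnit false 2 [::], CycUnit false 2 [::])
    [:: 27; 25; -26; -13; 27; -8; -39; 34; 54; -53; -50; 51; 28; -35; -3; 27; -16; -28; 27;
        25; -24; -15; 8; 11; 13; -18; -26]
    [:: 10; 5; -7; 1; 11; -10; -20; 20; 20; -20; -10; 11; 1; -7; 5; 10; -10; -10; 10; 5; -4;
        -2; -4; 5; 10; -10; -10]
    [:: -19; -23; 24; 18; -24; -4; 28; -16; -40; 37; 47; -47; -37; 40; 16; -28; 4; 24; -18;
        -24; 23; 19; -16; -12; 0; 12; 16];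
  Cert 3 (1, 1, 0)%N 2
    (CycUnit false 0 [::], CycUnit true 0 [:: 2; 4; 4; 4]%N, CycUnit false 2 [:: 7]%N)
    [:: 2; -5; -1; 0; -1; -1; 1; 2; -1; 1; 5; -1; -5; -5; 0; 6; 2; -1; 2; 0; -2; -1; 0; -1;
        -4; 2; 9]
    [:: -1; 6; 3; -1; 0; 0; -10; 0; 15; 2; -9; -9; 2; 15; 0; -10; 0; 0; -1; 3; 6; -1; -15;
        0; 20; 0; -15]
    [:: 0; -42; -2; 28; 4; -12; 0; 3; -14; -1; 28; 5; -28; -16; 16; 28; -5; -28; 1; 14; -3;
        0; 12; -4; -28; 2; 42];
  Cert 3 (1, 1, 1)%N 2
    (CycUnit false 0 [::], CycUnit false 2 [:: 4; 4; 4; 4]%N, CycUnit false 2 [:: 4]%N)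
    [:: -3; 0; -3; 1; 4; -4; -7; 8; 14; -3; -9; -3; -8; -2; 15; 9; -7; -5; 3; 0; -4; 1; -2;
        -4; 9; 8; -5]
    [:: 0; -5; -2; 9; 10; -5; -18; 1; 10; 0; 10; 1; -18; -5; 10; 9; -2; -5; 0; -5; 1; 9; -5;
        -5; 9; 1; -5]
    [:: 9; -14; -2; 0; -5; 14; 18; -16; -32; 9; 28; -3; 0; 3; -28; -9; 32; 16; -18; -14; 5;
        0; 2; 14; -9; -16; 16];
  Cert 3 (1, 1, 2)%N 2
    (CycUnit false 0 [::], CycUnit false 2 [:: 4; 4; 4]%N, CycUnit false 2 [::])
    [:: 19; 19; -21; -11; 22; -3; -28; 24; 40; -41; -41; 40; 25; -28; -3; 22; -11; -22; 19;
        19; -20; -12; 9; 10; 9; -13; -20]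
    [:: 10; 5; -7; 1; 11; -10; -20; 20; 20; -20; -10; 11; 1; -7; 5; 10; -10; -10; 10; 5; -4;
        -2; -4; 5; 10; -10; -10]
    [:: -19; -23; 24; 18; -24; -4; 28; -16; -40; 37; 47; -47; -37; 40; 16; -28; 4; 24; -18;
        -24; 23; 19; -16; -12; 0; 12; 16];
  Cert 3 (1, 2, 0)%N 2
    (CycUnit false 0 [::], CycUnit false 3 [:: 2; 2; 2; 2]%N, CycUnit false 2 [:: 7]%N)
    [:: 1; -12; -1; 5; 3; 0; 3; -1; -12; -1; 13; 4; -6; -10; 2; 13; -1; -7; 1; -1; -3; 3;
        10; 0; -17; -1; 18]
    [:: -1; 6; 3; -1; 0; 0; -10; 0; 15; 2; -9; -9; 2; 15; 0; -10; 0; 0; -1; 3; 6; -1; -15;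
        0; 20; 0; -15]
    [:: 0; -42; -2; 28; 4; -12; 0; 3; -14; -1; 28; 5; -28; -16; 16; 28; -5; -28; 1; 14; -3;
        0; 12; -4; -28; 2; 42];
  Cert 3 (1, 2, 1)%N 2
    (CycUnit false 0 [::], CycUnit false 2 [:: 4; 4; 4; 4; 4; 4; 4]%N, CycUnit false 2 [:: 4]%N)
    [:: 27; 75; 83; 52; 0; -55; -83; -69; -25; 27; 66; 82; 57; 0; -50; -81; -78; -30; 32;
        75; 81; 52; 0; -55; -81; -69; -30]
    [:: 0; -5; -2; 9; 10; -5; -18; 1; 10; 0; 10; 1; -18; -5; 10; 9; -2; -5; 0; -5; 1; 9; -5;
        -5; 9; 1; -5]
    [:: 9; -14; -2; 0; -5; 14; 18; -16; -32; 9; 28; -3; 0; 3; -28; -9; 32; 16; -18; -14; 5;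
        0; 2; 14; -9; -16; 16];
  Cert 3 (1, 2, 2)%N 2
    (CycUnit false 0 [::], CycUnit false 2 [:: 4; 4; 4; 4; 4; 4]%N, CycUnit false 2 [::])
    [:: 42; 40; -5; -20; -10; -29; -37; 14; 46; 2; -5; 40; 11; -48; -34; -3; -6; 4; 42; 40;
        -5; -20; -17; -22; -15; -8; 6]
    [:: 10; 5; -7; 1; 11; -10; -20; 20; 20; -20; -10; 11; 1; -7; 5; 10; -10; -10; 10; 5; -4;
        -2; -4; 5; 10; -10; -10]
    [:: -19; -23; 24; 18; -24; -4; 28; -16; -40; 37; 47; -47; -37; 40; 16; -28; 4; 24; -18;
        -24; 23; 19; -16; -12; 0; 12; 16];
  Cert 3 (2, 0, 0)%N 1
    (CycUnit false 0 [::], CycUnit false 2 [:: 4; 4; 4]%N, CycUnit false 2 [::])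
    [:: -1; -1; -1; 8; -19; 28; -19; 8; -2; -1; -1; 0; -3; 11; -12; 11; -4; 0; -1; -1; 0;
        -3; 11; -12; 11; -4]
    [:: 0; 0; -2; 12; -30; 40; -30; 12; -2; 0; 0; 1; -6; 15; -20; 15; -6; 1; 0; 0; 1; -6;
        15; -20; 15; -6; 1]
    [:: 12; -3; 1; -6; 24; -56; 84; -84; 56; -24; 6; -1; 3; -12; 28; -42; 42; -28; 12; -3;
        0; 3; -12; 28; -42; 42; -28];
  Cert 3 (2, 0, 1)%N 1
    (CycUnit false 0 [::], CycUnit false 2 [:: 4; 4; 4; 4]%N, CycUnit false 2 [:: 4]%N)
    [:: 17; -18; 3; 7; -27; 39; -25; 7; 24; -37; 27; -18; -3; 13; -16; 18; 1; -10; 17; -18;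
        5; -10; 14; -16; 18; 1; -10]
    [:: 10; -5; -1; 10; -20; 20; -8; -8; 20; -20; 10; -1; -5; 10; -10; 4; 4; -10; 10; -5; 2;
        -5; 10; -10; 4; 4; -10]
    [:: -16; 23; -18; 4; 16; -37; 46; -32; 0; 32; -46; 37; -16; -4; 18; -23; 16; 0; -16; 23;
        -19; 12; -12; 19; -23; 16];
  Cert 3 (2, 0, 2)%N 1
    (CycUnit false 0 [::], CycUnit true 0 [:: 2; 4; 4; 4]%N, CycUnit false 2 [:: 7]%N)
    [:: 0; 8; -24; 44; -70; 74; -57; 32; -7; 5; -16; 41; -70; 72; -60; 37; -14; 7; 0; 8;
        -21; 20; -8; -16; 23; -12; 7]
    [:: -1; 5; -12; 20; -25; 21; -10; 2; 0; 2; -10; 21; -25; 20; -12; 5; -1; 0; -1; 5; -9;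
        5; 5; -9; 5; -1]
    [:: 3; -3; 10; -24; 42; -56; 56; -40; 19; -6; 6; -19; 40; -56; 56; -42; 24; -10; 3; -3;
        9; -16; 14; 0; -14; 16; -9];
  Cert 3 (2, 1, 0)%N 1
    (CycUnit false 0 [::], CycUnit false 2 [:: 4; 4; 4; 4; 4; 4]%N, CycUnit false 2 [::])
    [:: 29; 25; 10; -7; -31; -25; -15; -6; 22; 28; 25; 10; -11; -22; -30; -20; 3; 17; 29;
        25; 10; -11; -22; -30; -20; 3; 17]
    [:: 0; 0; -2; 12; -30; 40; -30; 12; -2; 0; 0; 1; -6; 15; -20; 15; -6; 1; 0; 0; 1; -6;
        15; -20; 15; -6; 1]
    [:: 12; -3; 1; -6; 24; -56; 84; -84; 56; -24; 6; -1; 3; -12; 28; -42; 42; -28; 12; -3;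
        0; 3; -12; 28; -42; 42; -28];
  Cert 3 (2, 1, 1)%N 1
    (CycUnit false 0 [::], CycUnit false 2 [:: 4; 4; 4; 4; 4; 4; 4]%N, CycUnit false 2 [:: 4]%N)
    [:: 40; 62; 87; 59; -17; -30; -101; -68; -15; 6; 92; 71; 54; 8; -65; -72; -74; -35; 40;
        62; 88; 48; 9; -65; -72; -74; -35]
    [:: 10; -5; -1; 10; -20; 20; -8; -8; 20; -20; 10; -1; -5; 10; -10; 4; 4; -10; 10; -5; 2;
        -5; 10; -10; 4; 4; -10]
    [:: -16; 23; -18; 4; 16; -37; 46; -32; 0; 32; -46; 37; -16; -4; 18; -23; 16; 0; -16; 23;
        -19; 12; -12; 19; -23; 16];
  Cert 3 (2, 1, 2)%N 1
    (CycUnit false 0 [::], CycUnit false 3 [:: 2; 2; 2; 2]%N, CycUnit false 2 [:: 7]%N)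
    [:: -1; 6; -17; 36; -52; 60; -48; 25; -9; 3; -12; 32; -52; 60; -48; 30; -15; 4; -1; 6;
        -15; 18; -5; -10; 17; -13; 4]
    [:: -1; 5; -12; 20; -25; 21; -10; 2; 0; 2; -10; 21; -25; 20; -12; 5; -1; 0; -1; 5; -9;
        5; 5; -9; 5; -1]
    [:: 3; -3; 10; -24; 42; -56; 56; -40; 19; -6; 6; -19; 40; -56; 56; -42; 24; -10; 3; -3;
        9; -16; 14; 0; -14; 16; -9];
  Cert 3 (2, 2, 0)%N 1
    (CycUnit false 0 [::], CycUnit false 2 [::], CycUnit false 2 [::])
    [:: 1; 0; 1; -2; 8; -20; 27; -20; 8; -1; 0; 0; 1; -4; 10; -13; 10; -4; 1; 0; 0; 1; -4;
        10; -13; 10; -4]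
    [:: 0; 0; -2; 12; -30; 40; -30; 12; -2; 0; 0; 1; -6; 15; -20; 15; -6; 1; 0; 0; 1; -6;
        15; -20; 15; -6; 1]
    [:: 12; -3; 1; -6; 24; -56; 84; -84; 56; -24; 6; -1; 3; -12; 28; -42; 42; -28; 12; -3;
        0; 3; -12; 28; -42; 42; -28];
  Cert 3 (2, 2, 1)%N 1
    (CycUnit false 0 [::], CycUnit false 2 [:: 4]%N, CycUnit false 2 [:: 4]%N)
    [:: 5; -5; 4; 2; -7; 10; -10; 4; 4; -9; 10; -7; 2; 3; -5; 5; -2; -2; 5; -5; 4; -3; 4;
        -5; 5; -2; -2]
    [:: 10; -5; -1; 10; -20; 20; -8; -8; 20; -20; 10; -1; -5; 10; -10; 4; 4; -10; 10; -5; 2;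
        -5; 10; -10; 4; 4; -10]
    [:: -16; 23; -18; 4; 16; -37; 46; -32; 0; 32; -46; 37; -16; -4; 18; -23; 16; 0; -16; 23;
        -19; 12; -12; 19; -23; 16];
  Cert 3 (2, 2, 2)%N 1
    (CycUnit false 0 [::], CycUnit true 0 [:: 2]%N, CycUnit false 2 [:: 7]%N)
    [:: -1; 4; -11; 25; -38; 44; -37; 22; -8; 2; -8; 22; -37; 44; -38; 25; -12; 4; -1; 4;
        -10; 13; -6; -6; 13; -10; 4]
    [:: -1; 5; -12; 20; -25; 21; -10; 2; 0; 2; -10; 21; -25; 20; -12; 5; -1; 0; -1; 5; -9;
        5; 5; -9; 5; -1]
    [:: 3; -3; 10; -24; 42; -56; 56; -40; 19; -6; 6; -19; 40; -56; 56; -42; 24; -10; 3; -3;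
        9; -16; 14; 0; -14; 16; -9]].

End CertTable.

Definition residues : seq (nat * nat * nat) :=
  [seq (r, r2) | r <- [seq (r0, r1) | r0 <- [:: 1; 2], r1 <- iota 0 3], r2 <- iota 0 3]%N.

Lemma certs_cover : all (fun t => all (fun r => has (fun c =>
  [&& cert_ok c, cert_level c == t & cert_res c == r]) certs) residues) [:: 2; 3]%N.
Proof. by vm_compute. Qed.

Lemma Nk_lift t (m : int) : t \in [:: 2; 3]%N ->
  (exists h : {poly int}, ~~ (3 %| h.[1])%Z /\ m%:~R = Nk t (1 + ('X - 1) ^+ 5 * h)) ->
  exists F : {poly int},
    F.[1] = 3 /\ forall k, k \in [:: 1; 2; 3]%N -> Nk k F = 3 * (if k == t then m%:~R else 1).
Proof.
move=> t_in [h [h3 ->]]; have [r [C [H [r0_in r1_lt r2_lt ->]]]] := taylor_h_decomp h3.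
have r_in : r \in residues.
  case: r r0_in r1_lt r2_lt => [[r0 r1] r2] /=; rewrite !inE.
  by case/orP=> /eqP ->; case: r1 => [|[|[|]]] //; case: r2 => [|[|[|]]].
have [c /and3P[c_ok /eqP c_t /eqP c_r]] :=
  has_witness (allP (allP certs_cover t t_in) r r_in).
exists (cert_poly c C H); split; first exact: cert_poly_at1.
by move=> k k_in; rewrite Nk_cert_poly // c_t c_r; case: eqP => [->|].
Qed.

Theorem lemma4p5 (m : int) :
  ((exists h : {poly int}, ~~ (3 %| h.[1])%Z /\
      m%:~R = Nk 2 (1 + ('X - 1) ^+ 5 * h)) ->
    exists F : {poly int},
      [/\ F.[1] = 3, Nk 1 F = 3, Nk 3 F = 3,
          Nk 2 F = 3 * m%:~R & M27 F = 3 ^+ 4 * m%:~R])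
  /\
  ((exists h : {poly int}, ~~ (3 %| h.[1])%Z /\
      m%:~R = Nk 3 (1 + ('X - 1) ^+ 5 * h)) ->
    exists F : {poly int},
      [/\ F.[1] = 3, Nk 1 F = 3, Nk 2 F = 3,
          Nk 3 F = 3 * m%:~R & M27 F = 3 ^+ 4 * m%:~R]).
Proof.
split=> /Nk_lift[//|F [F1 NF]]; exists F;
  rewrite M27E evalZ_at1 F1 !NF //= !mulr1; split=> //; ring.
Qed.
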